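(* Let $P:\mathcal{C}^{\mathrm{op}}\to\mathbf{Hey}$ be a Gödel hyperdoctrine. Let $A,B$ be objects of $\mathcal{C}$, let $\beta_D\in P(A)$ be a quantifier-free predicate and let $\alpha\in P(A\times B)$ be an existential-free predicate. If \[ a:A\;|\;\top\vdash(\forall b.\alpha(a,b))\rightarrow\beta_D(a),\] then \[ a:A\;|\;\top\vdash\exists b.(\alpha(a,b)\rightarrow\beta_D(a)).\]
   Context: A hyperdoctrine is a functor $P:\mathcal{C}^{\mathrm{op}}\to\mathbf{Hey}$ from a cartesian closed category $\mathcal{C}$ to Heyting algebras such that each $P_f$ has a left adjoint $\exists_f$ and a right adjoint $\forall_f$ satisfying Beck–Chevalley. A Gödel hyperdoctrine is a hyperdoctrine which (as a functor to $\mathbf{Pos}$) is a Gödel doctrine. A doctrine $P:\mathcal{C}^{\mathrm{op}}\to\mathbf{Pos}$ ($\mathcal{C}$ with finite products) is existential/universal if reindexing along each product projection $\pi$ has a left adjoint $\exists_\pi$ / right adjoint $\forall_\pi$ satisfying Beck–Chevalley along pullbacks of projections. Notation: $a:A\;|\;\phi\vdash\psi$ means $\phi\le\psi$ in $P(A)$; $\exists b.\psi(a,b)=\exists_{\pi_A}\psi$, $\forall b.\psi(a,b)=\forall_{\pi_A}\psi$; $\top,\rightarrow$ are Heyting operations; substitution is reindexing. In an existential doctrine, $\alpha\in P(I)$ is existential-free if for every $f:A\to I$, every $B$ and every $\beta\in P(A\times B)$ with $P_f\alpha\le\exists_{\pi_A}\beta$ there is $g:A\to B$ with $P_f\alpha\le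 P_{\langle1_A,g\rangle}\beta$. In a universal doctrine $Q$, $\alpha\in Q(I)$ is universal-free if for every $f:A\to I$, every $B$ and every $\beta\in Q(A\times B)$ with $\forall_{\pi_A}\beta\le Q_f\alpha$ there is $g:A\to B$ with $Q_{\langle1_A,g\rangle}\beta\le Q_f\alpha$. Enough existential-free (universal-free) predicates: every $\alpha\in P(I)$ equals $\exists_{\pi_I}\beta$ (resp. $\forall_{\pi_I}\beta$) for some $A$ and existential-free (universal-free) $\beta\in P(I\times A)$. A Gödel doctrine: (1) $\mathcal{C}$ cartesian closed; (2) $P$ existential and universal; (3) $P$ has enough existential-free predicates; (4) existential-free predicates are stable under $\forall_\pi$ for projections $\pi$; (5) the sub-doctrine $P'$ of existential-free predicates (a universal doctrine) has enough universal-free predicates. A predicate is quantifier-free if it is existential-free in $P$ and universal-free in $P'$. *)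

Set Implicit Arguments.
Unset Strict Implicit.

Record CCC : Type := {
  Ob :> Type;
  Hom : Ob -> Ob -> Type;
  idm : forall A, Hom A A;
  comp : forall A B D, Hom B D -> Hom A B -> Hom A D;
  comp_idl : forall A B (f : Hom A B), comp (idm B) f = f;
  comp_idr : forall A B (f : Hom A B), comp f (idm A) = f;
  comp_assoc : forall A B D E (h : Hom D E) (g : Hom B D) (f : Hom A B),
      comp h (comp g f) = comp (comp h g) f;
  term : Ob;
  bang : forall A, Hom A term;
  bang_uniq : forall A (f : Hom A term), f = bang A;
  prod : Ob -> Ob -> Ob;
  pi1 : forall A B, Hom (prod A B) A;
  pi2 : forall A B, Hom (prod A B) B;
  pair : forall X A B, Hom X A -> Hom X B -> Hom X (prod A B);
  pi1_pair : forall X A B (f : Hom X A) (g : Hom X B), comp (pi1 A B) (pair f g) = f;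
  pi2_pair : forall X A B (f : Hom X A) (g : Hom X B), comp (pi2 A B) (pair f g) = g;
  pair_uniq : forall X A B (h : Hom X (prod A B)),
      h = pair (comp (pi1 A B) h) (comp (pi2 A B) h);
  (* exponentials: expo A B is B^A *)
  expo : Ob -> Ob -> Ob;
  ev : forall A B, Hom (prod (expo A B) A) B;
  curry : forall X A B, Hom (prod X A) B -> Hom X (expo A B);
  ev_curry : forall X A B (f : Hom (prod X A) B),
      comp (ev A B) (pair (comp (curry f) (pi1 X A)) (pi2 X A)) = f;
  curry_uniq : forall X A B (f : Hom (prod X A) B) (g : Hom X (expo A B)),
      comp (ev A B) (pair (comp g (pi1 X A)) (pi2 X A)) = f -> g = curry f
}.

Arguments Hom {c} _ _.
Arguments idm {c} _.
Arguments comp {c A B D} _ _.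
Arguments term {c}.
Arguments bang {c} _.
Arguments prod {c} _ _.
Arguments pi1 {c} _ _.
Arguments pi2 {c} _ _.
Arguments pair {c X A B} _ _.
Arguments expo {c} _ _.
Arguments ev {c} _ _.
Arguments curry {c X A B} _.

Notation "g ∘ f" := (comp g f) (at level 40, left associativity).

Definition is_pullback (C : CCC) (X Y Z W : C)
    (f : Hom X Z) (g : Hom Y Z) (h : Hom W X) (k : Hom W Y) : Prop :=
  f ∘ h = g ∘ k /\
  forall (V : C) (u : Hom V X) (v : Hom V Y), f ∘ u = g ∘ v ->
    exists m : Hom V W, h ∘ m = u /\ k ∘ m = v /\
      forall m' : Hom V W, h ∘ m' = u -> k ∘ m' = v -> m' = m.

Unset Implicit Arguments.
Record Hyperdoctrine (C : CCC) : Type := {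
  P : C -> Type;
  le : forall A, P A -> P A -> Prop;
  ptop : forall A, P A;
  pbot : forall A, P A;
  pmeet : forall A, P A -> P A -> P A;
  pjoin : forall A, P A -> P A -> P A;
  pimp : forall A, P A -> P A -> P A;
  le_refl : forall (A : C) (x : P A), le _ x x;
  le_trans : forall (A : C) (x y z : P A), le _ x y -> le _ y z -> le _ x z;
  le_antisym : forall (A : C) (x y : P A), le _ x y -> le _ y x -> x = y;
  top_max : forall (A : C) (x : P A), le _ x (ptop A);
  bot_min : forall (A : C) (x : P A), le _ (pbot A) x;
  meet_glb : forall (A : C) (x y z : P A), le _ z (pmeet _ x y) <-> (le _ z x /\ le _ z y);
  join_lub : forall (A : C) (x y z : P A), le _ (pjoin _ x y) z <-> (le _ x z /\ le _ y z);
  imp_adj : forall (A : C) (x y z : P A), le _ z (pimp _ x y) <-> le _ (pmeet _ z x) y;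
  reindex : forall A B : C, Hom A B -> P B -> P A;
  reindex_id : forall (A : C) (x : P A), reindex _ _ (idm A) x = x;
  reindex_comp : forall (A B D : C) (f : Hom A B) (g : Hom B D) x,
      reindex _ _ (g ∘ f) x = reindex _ _ f (reindex _ _ g x);
  reindex_top : forall (A B : C) (f : Hom A B), reindex _ _ f (ptop B) = ptop A;
  reindex_bot : forall (A B : C) (f : Hom A B), reindex _ _ f (pbot B) = pbot A;
  reindex_meet : forall (A B : C) (f : Hom A B) (x y : P B),
      reindex _ _ f (pmeet _ x y) = pmeet _ (reindex _ _ f x) (reindex _ _ f y);
  reindex_join : forall (A B : C) (f : Hom A B) (x y : P B),
      reindex _ _ f (pjoin _ x y) = pjoin _ (reindex _ _ f x) (reindex _ _ f y);
  reindex_imp : forall (A B : C) (f : Hom A B) (x y : P B),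
      reindex _ _ f (pimp _ x y) = pimp _ (reindex _ _ f x) (reindex _ _ f y);
  pex : forall A B : C, Hom A B -> P A -> P B;
  pall : forall A B : C, Hom A B -> P A -> P B;
  ex_adj : forall (A B : C) (f : Hom A B) (x : P A) (y : P B),
      le _ (pex _ _ f x) y <-> le _ x (reindex _ _ f y);
  all_adj : forall (A B : C) (f : Hom A B) (x : P A) (y : P B),
      le _ (reindex _ _ f y) x <-> le _ y (pall _ _ f x);
  ex_BC : forall (X Y Z W : C) (f : Hom X Z) (g : Hom Y Z) (h : Hom W X) (k : Hom W Y),
      is_pullback f g h k -> forall x, reindex _ _ g (pex _ _ f x) = pex _ _ k (reindex _ _ h x);
  all_BC : forall (X Y Z W : C) (f : Hom X Z) (g : Hom Y Z) (h : Hom W X) (k : Hom W Y),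
      is_pullback f g h k -> forall x, reindex _ _ g (pall _ _ f x) = pall _ _ k (reindex _ _ h x)
}.
Set Implicit Arguments.

Arguments P {C} _ _ : rename.
Arguments le {C h A} _ _ : rename.
Arguments ptop {C h} A : rename.
Arguments pbot {C h} A : rename.
Arguments pmeet {C h A} _ _ : rename.
Arguments pjoin {C h A} _ _ : rename.
Arguments pimp {C h A} _ _ : rename.
Arguments reindex {C h A B} _ _ : rename.
Arguments pex {C h A B} _ _ : rename.
Arguments pall {C h A B} _ _ : rename.

Section Godel.
Context {C : CCC} (H : Hyperdoctrine C).

Definition exfree (I : C) (alpha : P H I) : Prop :=
  forall (A : C) (f : Hom A I) (B : C) (beta : P H (prod A B)),
    le (reindex f alpha) (pex (pi1 A B) beta) ->
    exists g : Hom A B, le (reindex f alpha) (reindex (pair (idm A) g) beta).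

(* alpha is universal-free in the sub-doctrine P' of existential-free
   predicates (whose reindexing and universal quantifiers along projections
   are those of P, by stability). *)
Definition unfree' (I : C) (alpha : P H I) : Prop :=
  forall (A : C) (f : Hom A I) (B : C) (beta : P H (prod A B)),
    exfree beta ->
    le (pall (pi1 A B) beta) (reindex f alpha) ->
    exists g : Hom A B, le (reindex (pair (idm A) g) beta) (reindex f alpha).

Definition qfree (I : C) (alpha : P H I) : Prop :=
  exfree alpha /\ unfree' alpha.

(* Goedel doctrine conditions (1)-(2) hold for any hyperdoctrine as defined
   above (C is cartesian closed; quantifiers along all maps, in particular
   projections, with Beck-Chevalley along all pullbacks). *)
Record IsGodel : Prop := {
  enough_exfree : forall (I : C) (alpha : P H I),
      exists (A : C) (beta : P H (prod I A)),
        exfree beta /\ alpha = pex (pi1 I A) beta;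
  exfree_all : forall (I A : C) (beta : P H (prod I A)),
      exfree beta -> exfree (pall (pi1 I A) beta);
  enough_unfree : forall (I : C) (alpha : P H I), exfree alpha ->
      exists (A : C) (beta : P H (prod I A)),
        exfree beta /\ unfree' beta /\ alpha = pall (pi1 I A) beta
}.

End Godel.


(* Since betaD is universal-free in the doctrine of existential-free
   predicates and alpha is existential-free, the hypothesis
   [forall b. alpha(a,b) |- betaD(a)] yields a map g : A -> B with
   [alpha(a, g a) |- betaD(a)].  Then [alpha(a,b) -> betaD(a)] holds at
   b := g a, so g witnesses the existential. *)

Section HyperdoctrineFacts.
Context {C : CCC} (H : Hyperdoctrine C).

Lemma reindex_mono {X Y : C} (f : Hom X Y) (x y : P H Y) :
  le x y -> le (reindex f x) (reindex f y).
Proof.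
  intro Hxy.
  apply (ex_adj _ H), (le_trans _ H _ _ x); [| exact Hxy].
  apply (ex_adj _ H), le_refl.
Qed.

Lemma le_top_imp {X : C} (x y : P H X) :
  le (ptop X) (pimp x y) <-> le x y.
Proof.
  split; intro Hxy.
  - apply (imp_adj _ H) in Hxy.
    apply (le_trans _ H _ _ (pmeet (ptop X) x)); [| exact Hxy].
    apply (meet_glb _ H); split; [apply top_max | apply le_refl].
  - apply (imp_adj _ H), (le_trans _ H _ _ x); [| exact Hxy].
    apply (meet_glb _ H X (ptop X) x (pmeet (ptop X) x)), le_refl.
Qed.

Lemma reindex_pair_pi1 {X Y : C} (g : Hom X Y) (y : P H X) :
  reindex (pair (idm X) g) (reindex (pi1 X Y) y) = y.
Proof. now rewrite <- reindex_comp, pi1_pair, reindex_id. Qed.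

Lemma reindex_pair_le_ex {X Y : C} (g : Hom X Y) (x : P H (prod X Y)) :
  le (reindex (pair (idm X) g) x) (pex (pi1 X Y) x).
Proof.
  rewrite <- (reindex_pair_pi1 g (pex (pi1 X Y) x)).
  apply reindex_mono, (ex_adj _ H), le_refl.
Qed.

End HyperdoctrineFacts.

Theorem theorem6 (C : CCC) (H : Hyperdoctrine C) (HG : IsGodel H)
    (A B : C) (betaD : P H A) (alpha : P H (prod A B)) :
  qfree betaD -> exfree alpha ->
  le (ptop A) (pimp (pall (pi1 A B) alpha) betaD) ->
  le (ptop A) (pex (pi1 A B) (pimp alpha (reindex (pi1 A B) betaD))).
Proof.
  intros [_ betaD_unfree] alpha_exfree Himp.
  assert (all_le : le (pall (pi1 A B) alpha) (reindex (idm A) betaD)).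
  { rewrite reindex_id. now apply le_top_imp. }
  destruct (betaD_unfree A (idm A) B alpha alpha_exfree all_le) as [g Hg].
  rewrite reindex_id in Hg.
  apply (le_trans _ H _ _ (reindex (pair (idm A) g)
                             (pimp alpha (reindex (pi1 A B) betaD)))).
  - rewrite reindex_imp, reindex_pair_pi1. now apply le_top_imp.
  - apply reindex_pair_le_ex.
Qed.
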